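(* Let $\mathcal{W}\subseteq\{x\in\mathbb{R}^d:\|x\|_2\le1\}$ be closed convex with $0\in\mathcal{W}$, let $f_t(x)=\langle \mathbf f_t,x\rangle$ for vectors $\mathbf f_1,\dots,\mathbf f_T\in\mathbb{R}^d$, set $\mathbf f_0=0$ and $\mathrm{EGV}^f_{T,2}=\sum_{t=0}^{T-1}\|\mathbf f_{t+1}-\mathbf f_t\|_2^2>0$. Run the online mirror prox updates with $L=1$ and $\eta=\sqrt{1/(2\mathrm{EGV}^f_{T,2})}$, i.e. $x_0=z_0=0$ and $$x_t=\arg\min_{x\in\mathcal{W}}\{\langle x,\mathbf f_{t-1}\rangle+\tfrac1{2\eta}\|x-z_{t-1}\|_2^2\},\quad z_t=\arg\min_{x\in\mathcal{W}}\{\langle x,\mathbf f_t\rangle+\tfrac1{2\eta}\|x-z_{t-1}\|_2^2\}.$$ Then $\sum_{t=1}^T\langle\mathbf f_t,x_t\rangle-\min_{x\in\mathcal{W}}\sum_{t=1}^T\langle\mathbf f_t,x\rangle\le\sqrt{2\,\mathrm{EGV}^f_{T,2}}$.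
   Context: $x_t$ is the decision played at round $t$, before $\mathbf f_t$ is revealed. *)

(* classical reals. Vectors of R^d are represented as
   functions nat -> R, with only coordinates 0..d-1 being meaningful;
   points of the decision set are required to vanish at coordinates >= d. *)
From Stdlib Require Import Reals Lra Lia.
Open Scope R_scope.

Definition vec := nat -> R.

Fixpoint sumR (n : nat) (g : nat -> R) : R :=
  match n with
  | O => 0
  | S m => sumR m g + g m
  end.

Definition dot (d : nat) (x y : vec) : R := sumR d (fun i => x i * y i).
Definition sqnorm (d : nat) (x : vec) : R := dot d x x.
Definition vsub (x y : vec) : vec := fun i => x i - y i.
Definition vzero : vec := fun _ => 0.

Definition in_Rd (d : nat) (W : vec -> Prop) : Prop :=
  forall w, W w -> forall i, (d <= i)%nat -> w i = 0.

Definition convex_W (W : vec -> Prop) : Prop :=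
  forall x y (l : R), W x -> W y -> 0 <= l <= 1 ->
    W (fun i => l * x i + (1 - l) * y i).

(* closed in R^d: limits (coordinatewise = in norm, finite dimension)
   of sequences in W belong to W *)
Definition closed_in_Rd (d : nat) (W : vec -> Prop) : Prop :=
  forall (s : nat -> vec) (x : vec),
    (forall n, W (s n)) ->
    (forall i, (i < d)%nat -> Un_cv (fun n => s n i) (x i)) ->
    (forall i, (d <= i)%nat -> x i = 0) ->
    W x.

Definition is_argmin (W : vec -> Prop) (g : vec -> R) (x : vec) : Prop :=
  W x /\ forall y, W y -> g x <= g y.

Definition EGV (d T : nat) (f : nat -> vec) : R :=
  sumR T (fun t => sqnorm d (vsub (f (S t)) (f t))).

Definition prox_obj (d : nat) (eta : R) (g z : vec) (x : vec) : R :=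
  dot d x g + / (2 * eta) * sqnorm d (vsub x z).

(* Each round's regret splits as
     <f_t, x_t - u> = <f_t, z_t - u> + <f_{t-1}, x_t - z_t> + <f_t - f_{t-1}, x_t - z_t>.
   The three-point inequality of the two proximal steps bounds the first two
   terms by (||u - z_{t-1}||^2 - ||u - z_t||^2 - ||x_t - z_t||^2) / (2 eta), and
   Young's inequality bounds the last by ||x_t - z_t||^2 / (2 eta)
   + eta/2 ||f_t - f_{t-1}||^2.  Summing telescopes to
   ||u||^2 / (2 eta) + eta/2 EGV, and the choice of eta balances the two terms. *)
From Stdlib Require Import Reals Lra Lia.
Open Scope R_scope.

Lemma sumR_scal (n : nat) (c : R) (g : nat -> R) :
  sumR n (fun i => c * g i) = c * sumR n g.
Proof. induction n as [|n IH]; simpl; [ring | rewrite IH; ring]. Qed.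

Lemma sumR_le_telescoping (n : nat) (a b D e : nat -> R) :
  (forall t, (t < n)%nat -> a t - b t <= D t - D (S t) + e t) ->
  sumR n a - sumR n b <= D O - D n + sumR n e.
Proof.
  induction n as [|n IH]; intros Hstep; simpl; [lra |].
  specialize (IH (fun t Ht => Hstep t ltac:(lia))).
  specialize (Hstep n ltac:(lia)).
  lra.
Qed.

Ltac coordinatewise d :=
  unfold sqnorm, dot, vsub, vzero; induction d as [|n IH]; simpl;
  [ring | rewrite IH; ring].

Section Euclidean.

Variable d : nat.

Lemma sqnorm_ge0 (a : vec) : 0 <= sqnorm d a.
Proof. unfold sqnorm, dot; induction d as [|n IH]; simpl; nra. Qed.

Lemma dot_comm (a b : vec) : dot d a b = dot d b a.
Proof. coordinatewise d. Qed.

Lemma dot_vsub_l (a b c : vec) : dot d (vsub a b) c = dot d a c - dot d b c.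
Proof. coordinatewise d. Qed.

Lemma dot_vsub_r (a b c : vec) : dot d a (vsub b c) = dot d a b - dot d a c.
Proof. coordinatewise d. Qed.

Lemma sqnorm_vsubC (a b : vec) : sqnorm d (vsub a b) = sqnorm d (vsub b a).
Proof. coordinatewise d. Qed.

Lemma sqnorm_vsub0 (a : vec) : sqnorm d (vsub a vzero) = sqnorm d a.
Proof. coordinatewise d. Qed.

Lemma sqnorm_vsub_split (u w z : vec) :
  sqnorm d (vsub u z)
  = sqnorm d (vsub u w) + 2 * dot d (vsub u w) (vsub w z) + sqnorm d (vsub w z).
Proof. coordinatewise d. Qed.

Lemma dot_convex_comb (l : R) (u w g : vec) :
  dot d (fun i => l * u i + (1 - l) * w i) g = dot d w g + l * dot d (vsub u w) g.
Proof. coordinatewise d. Qed.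

Lemma sqnorm_convex_comb (l : R) (u w z : vec) :
  sqnorm d (vsub (fun i => l * u i + (1 - l) * w i) z)
  = sqnorm d (vsub w z) + 2 * l * dot d (vsub u w) (vsub w z)
    + l * l * sqnorm d (vsub u w).
Proof. coordinatewise d. Qed.

Lemma dot_le_young (eta : R) (a b : vec) :
  0 < eta -> dot d a b <= / (2 * eta) * sqnorm d a + eta / 2 * sqnorm d b.
Proof.
  intros Heta; unfold sqnorm, dot; induction d as [|n IH]; simpl; [lra |].
  assert (Hsq : / (2 * eta) * (a n * a n) + eta / 2 * (b n * b n) - a n * b n
                = / (2 * eta) * ((a n - eta * b n) * (a n - eta * b n)))
    by (field; lra).
  assert (0 <= / (2 * eta) * ((a n - eta * b n) * (a n - eta * b n))).
  { apply Rmult_le_pos; [left; apply Rinv_0_lt_compat; lra | apply Rle_0_sqr]. }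
  lra.
Qed.

End Euclidean.

Lemma ge0_of_small_steps (A B : R) :
  0 <= B -> (forall l, 0 < l <= 1 -> 0 <= l * A + l * l * B) -> 0 <= A.
Proof.
  intros HB Hsmall.
  destruct (Rle_lt_dec 0 A) as [| HA]; [assumption |].
  (* The step l solves l * (B + 1 - A) = - A, which makes l * A + l^2 * B = l * (A - 1). *)
  set (l := - A / (B + 1 - A)).
  assert (Hl : l * (B + 1 - A) = - A) by (unfold l; field; lra).
  assert (Hl0 : 0 < l) by (unfold l; apply Rdiv_lt_0_compat; lra).
  assert (Hl1 : l <= 1) by nra.
  specialize (Hsmall l (conj Hl0 Hl1)).
  nra.
Qed.

Section ProxStep.

Variables (d : nat) (W : vec -> Prop) (eta : R) (g z w : vec).
Hypotheses (Heta : 0 < eta) (HW : convex_W W)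
  (Hw : is_argmin W (prox_obj d eta g z) w).

Lemma prox_argmin_first_order (u : vec) :
  W u -> 0 <= dot d (vsub u w) g + / eta * dot d (vsub u w) (vsub w z).
Proof.
  intros Hu; destruct Hw as [Hww Hmin].
  assert (Hc : 0 < / (2 * eta)) by (apply Rinv_0_lt_compat; lra).
  replace (/ eta) with (2 * / (2 * eta)) by (field; lra).
  apply (ge0_of_small_steps _ (/ (2 * eta) * sqnorm d (vsub u w))).
  - apply Rmult_le_pos; [lra | apply sqnorm_ge0].
  - intros l Hl.
    specialize (Hmin _ (HW u w l Hu Hww ltac:(lra))).
    unfold prox_obj in Hmin.
    rewrite dot_convex_comb, sqnorm_convex_comb in Hmin.
    nra.
Qed.

Lemma prox_argmin_three_point (u : vec) :
  W u ->
  dot d (vsub w u) g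
  <= / (2 * eta) * (sqnorm d (vsub u z) - sqnorm d (vsub u w) - sqnorm d (vsub w z)).
Proof.
  intros Hu.
  pose proof (prox_argmin_first_order u Hu) as Hfo.
  rewrite (sqnorm_vsub_split d u w z), (dot_vsub_l d w u g).
  rewrite (dot_vsub_l d u w g) in Hfo.
  replace (/ eta) with (2 * / (2 * eta)) in Hfo by (field; lra).
  lra.
Qed.

End ProxStep.

Section MirrorProx.

Variables (d T : nat) (W : vec -> Prop) (f x z : nat -> vec) (eta : R).
Hypotheses (Heta : 0 < eta) (HW : convex_W W).
Hypothesis Hsteps : forall t, (t < T)%nat ->
  is_argmin W (prox_obj d eta (f t) (z t)) (x (S t)) /\
  is_argmin W (prox_obj d eta (f (S t)) (z t)) (z (S t)).

Lemma mirror_prox_round_regret (u : vec) (t : nat) :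
  W u -> (t < T)%nat ->
  dot d (f (S t)) (x (S t)) - dot d (f (S t)) u
  <= / (2 * eta) * sqnorm d (vsub u (z t)) - / (2 * eta) * sqnorm d (vsub u (z (S t)))
     + eta / 2 * sqnorm d (vsub (f (S t)) (f t)).
Proof.
  intros Hu Ht; destruct (Hsteps t Ht) as [Hx Hz].
  pose proof (prox_argmin_three_point d W eta _ _ _ Heta HW Hz u Hu) as Hz_u.
  pose proof (prox_argmin_three_point d W eta _ _ _ Heta HW Hx (z (S t)) (proj1 Hz))
    as Hx_z.
  pose proof (dot_le_young d eta (vsub (x (S t)) (z (S t))) (vsub (f (S t)) (f t)) Heta)
    as Hyoung.
  assert (0 <= / (2 * eta) * sqnorm d (vsub (x (S t)) (z t))).
  { apply Rmult_le_pos; [left; apply Rinv_0_lt_compat; lra | apply sqnorm_ge0]. }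
  assert (Hsplit : dot d (f (S t)) (x (S t)) - dot d (f (S t)) u
    = dot d (vsub (z (S t)) u) (f (S t)) + dot d (vsub (x (S t)) (z (S t))) (f t)
      + dot d (vsub (x (S t)) (z (S t))) (vsub (f (S t)) (f t))).
  { rewrite dot_vsub_r, !dot_vsub_l, (dot_comm d (f (S t)) (x (S t))),
      (dot_comm d (f (S t)) u); ring. }
  rewrite (sqnorm_vsubC d (z (S t)) (x (S t))) in Hx_z.
  lra.
Qed.

Lemma mirror_prox_regret (u : vec) :
  W u ->
  sumR T (fun t => dot d (f (S t)) (x (S t))) - sumR T (fun t => dot d (f (S t)) u)
  <= / (2 * eta) * sqnorm d (vsub u (z O)) + eta / 2 * EGV d T f.
Proof.
  intros Hu.
  eapply Rle_trans.
  - apply (sumR_le_telescoping T _ _ (fun t => / (2 * eta) * sqnorm d (vsub u (z t)))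
             (fun t => eta / 2 * sqnorm d (vsub (f (S t)) (f t)))).
    intros t Ht; pose proof (mirror_prox_round_regret u t Hu Ht); lra.
  - rewrite sumR_scal.
    assert (0 <= / (2 * eta) * sqnorm d (vsub u (z T))).
    { apply Rmult_le_pos; [left; apply Rinv_0_lt_compat; lra | apply sqnorm_ge0]. }
    unfold EGV; lra.
Qed.

End MirrorProx.

Lemma tuned_step_size_bound (E : R) :
  0 < E ->
  / (2 * sqrt (1 / (2 * E))) + sqrt (1 / (2 * E)) / 2 * E <= sqrt (2 * E).
Proof.
  intros HE.
  set (s := sqrt (2 * E)).
  assert (Hs : 0 < s) by (apply sqrt_lt_R0; lra).
  assert (Hss : s * s = 2 * E) by (apply sqrt_sqrt; lra).
  replace (sqrt (1 / (2 * E))) with (/ s)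
    by (unfold s; rewrite <- sqrt_inv; f_equal; field; lra).
  (* The left-hand side equals s / 2 + s / 4. *)
  replace E with (s * s / 2) by lra.
  apply (Rmult_le_reg_r 4); [lra |].
  field_simplify; lra.
Qed.

Theorem mainTheorem5 (d T : nat) (W : vec -> Prop) (f : nat -> vec)
  (x z : nat -> vec) :
  in_Rd d W ->
  (forall w, W w -> sqnorm d w <= 1) ->
  closed_in_Rd d W ->
  convex_W W ->
  W vzero ->
  (forall i, f O i = 0) ->
  0 < EGV d T f ->
  x O = vzero -> z O = vzero ->
  (forall t, (1 <= t <= T)%nat ->
     is_argmin W (prox_obj d (sqrt (1 / (2 * EGV d T f))) (f (t - 1)%nat) (z (t - 1)%nat)) (x t) /\
     is_argmin W (prox_obj d (sqrt (1 / (2 * EGV d T f))) (f t) (z (t - 1)%nat)) (z t)) ->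
  forall u, W u ->
    sumR T (fun t => dot d (f (S t)) (x (S t))) - sumR T (fun t => dot d (f (S t)) u)
      <= sqrt (2 * EGV d T f).
Proof.
  (* Closedness, 0 \in W and the values of f_0, x_0 only serve to make the
     iterates well defined; the argmin hypotheses already provide them. *)
  intros _ Hball _ HW _ _ HE _ Hz0 Hsteps u Hu.
  set (eta := sqrt (1 / (2 * EGV d T f))) in *.
  assert (Heta : 0 < eta).
  { apply sqrt_lt_R0, Rdiv_lt_0_compat; lra. }
  assert (Hsteps' : forall t, (t < T)%nat ->
    is_argmin W (prox_obj d eta (f t) (z t)) (x (S t)) /\
    is_argmin W (prox_obj d eta (f (S t)) (z t)) (z (S t))).
  { intros t Ht; pose proof (Hsteps (S t) ltac:(lia)) as Hstep.
    replace (S t - 1)%nat with t in Hstep by lia; exact Hstep. }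
  eapply Rle_trans; [exact (mirror_prox_regret d T W f x z eta Heta HW Hsteps' u Hu) |].
  rewrite Hz0, sqnorm_vsub0.
  eapply Rle_trans; [| apply (tuned_step_size_bound _ HE)].
  assert (/ (2 * eta) * sqnorm d u <= / (2 * eta)).
  { pose proof (Hball u Hu).
    assert (0 < / (2 * eta)) by (apply Rinv_0_lt_compat; lra).
    nra. }
  fold eta; lra.
Qed.
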